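(* Let $X$ and $Y$ be locally compact Hausdorff spaces and $\pi:X\to Y$ a proper map (i.e. $\pi^{-1}(K)$ is compact for every compact $K\subseteq Y$). For an object $Y+_fZ$ of $\mathrm{Comp}(Y)$ define $f^\ast:\mathrm{Closed}(X)\to\mathrm{Closed}(Z)$ by $f^\ast(A)=\mathrm{Cl}_Z\big(f(\mathrm{Cl}_Y(\pi(A)))\big)$. Then the assignment $\Pi(Y+_fZ)=X+_{f^\ast}Z$ and, for a morphism $\mathrm{id}+\varpi:Y+_fZ\to Y+_gW$, $\Pi(\mathrm{id}+\varpi)=\mathrm{id}+\varpi:X+_{f^\ast}Z\to X+_{g^\ast}W$, is a functor $\Pi:\mathrm{Comp}(Y)\to\mathrm{Comp}(X)$.
   Context: $\mathrm{Closed}(A)$ is the set of closed subsets of a space $A$; $f:\mathrm{Closed}(A)\to\mathrm{Closed}(B)$ is admissible if $f(\emptyset)=\emptyset$ and $f$ preserves finite unions; $A+_fB$ is $A\sqcup B$ with closed sets the $D$ such that $D\cap A$ is closed in $A$, $D\cap B$ closed in $B$ and $f(D\cap A)\subseteq D$. For a locally compact Hausdorff space $X$, $\mathrm{Comp}(X)$ is the category whose objects are compact spaces $X+_fW$ with $W$ compact Hausdorff and $f$ admissible, and whose morphisms are continuous maps restricting to the identity on $X$ (hence of the form $\mathrm{id}+\varpi$, with $\varpi$ a map between the remainders). *)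

From HB Require Import structures.
From mathcomp Require Import all_boot all_classical all_reals all_analysis.

Set Implicit Arguments.
Unset Strict Implicit.
Unset Printing Implicit Defensive.

Local Open Scope classical_set_scope.

(** A map Closed(A) -> Closed(B) is
    represented by a function [set A -> set B]; only its values on closed
    sets matter, and it is required to send closed sets to closed sets. *)
Definition admissible (A B : topologicalType) (f : set A -> set B) : Prop :=
  [/\ (forall C, closed C -> closed (f C)),
      f set0 = set0 &
      (forall C D, closed C -> closed D -> f (C `|` D) = f C `|` f D)].

Definition adj_closed (A B : topologicalType) (f : set A -> set B)
    (D : set (A + B)%type) : Prop :=
  [/\ closed (inl @^-1` D : set A),
      closed (inr @^-1` D : set B) &
      f (inl @^-1` D) `<=` inr @^-1` D].

(** When f is
    admissible the [adj_closed] sets already form the closed sets of a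
    topology, so this is exactly the topology of the paper. *)
Definition adj (A B : topologicalType) (f : set A -> set B) : Type :=
  (A + B)%type.

HB.instance Definition _ (A B : topologicalType) (f : set A -> set B) :=
  Choice.on (adj f).

HB.instance Definition _ (A B : topologicalType) (f : set A -> set B) :=
  @isSubBaseTopological.Build (adj f) (set (A + B)%type)
    [set U | adj_closed f (~` U)] id.

Definition idsum (A B C : Type) (w : B -> C) (s : (A + B)%type) : (A + C)%type :=
  match s with inl a => inl a | inr b => inr (w b) end.

Definition proper_map (X Y : topologicalType) (p : X -> Y) : Prop :=
  continuous p /\ forall K : set Y, compact K -> compact (p @^-1` K).

Definition fstar (X Y Z : topologicalType) (p : X -> Y) (f : set Y -> set Z)
    (A : set X) : set Z :=
  closure (f (closure (p @` A))).

Definition comp_object (Y Z : topologicalType) (f : set Y -> set Z) : Prop :=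
  [/\ compact [set: Z], hausdorff_space Z, admissible f &
      compact [set: adj f]].

Definition comp_morphism (Y Z W : topologicalType) (f : set Y -> set Z)
    (g : set Y -> set W) (w : Z -> W) : Prop :=
  continuous (idsum w : adj f -> adj g).

From HB Require Import structures.
From mathcomp Require Import all_boot all_classical all_reals all_analysis.

(** For admissible [f] the closed sets of [A +_f B] are exactly the
    [adj_closed] sets.  Hence [id + w : A +_f B -> A +_g C] is continuous
    iff [w] is continuous and [f C ⊆ w⁻¹ (g C)] for closed [C], a condition
    that passes from [f, g] to [f^*, g^*] by taking closures.  When [B] is
    compact, [A +_f B] is compact iff every closed [C ⊆ A] with [f C = ∅] is
    compact: a filter either accumulates on [B], or contains a set whose
    closure lies in such a [C].  For [f^*], a closed [C ⊆ X] with
    [f^* C = ∅] is closed in [π⁻¹ (Cl (π C))], and [f (Cl (π C)) = ∅] makes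
    [Cl (π C)] compact in [Y]; properness of [π] concludes. *)

Set Implicit Arguments.
Unset Strict Implicit.
Unset Printing Implicit Defensive.

Local Open Scope classical_set_scope.

Section AdjunctionSpace.
Context (A B : topologicalType) (f : set A -> set B).

Lemma adj_closed_closed (D : set (adj f)) : adj_closed f D -> closed D.
Proof.
move=> fD; rewrite -openC; exists [set ~` D]; last by rewrite bigcup_set1.
by move=> _ ->; apply: finI_from1; rewrite /= setCK.
Qed.

Hypothesis adm : admissible f.

Lemma admissible_subset (C D : set A) :
  closed C -> closed D -> C `<=` D -> f C `<=` f D.
Proof.
case: adm => _ _ fU cC cD CD.
by rewrite -(setUidr CD) fU //; apply: subsetUl.
Qed.

Lemma adj_closed0 : adj_closed f set0.
Proof.
by case: adm => _ f0 _; split; rewrite ?preimage_set0 ?f0 //; apply: closed0.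
Qed.

Lemma adj_closedU (D E : set (adj f)) :
  adj_closed f D -> adj_closed f E -> adj_closed f (D `|` E).
Proof.
case: adm => _ _ fU [cDl cDr fD] [cEl cEr fE].
split; rewrite !preimage_setU; try exact: closedU.
by rewrite fU //; apply: setUSS.
Qed.

Lemma adj_closed_bigcap (I : Type) (P : set I) (D : I -> set (adj f)) :
  (forall i, P i -> adj_closed f (D i)) -> adj_closed f (\bigcap_(i in P) D i).
Proof.
move=> fD; have cl i : P i -> closed (inl @^-1` D i) by case/fD.
have cr i : P i -> closed (inr @^-1` D i) by case/fD.
split; rewrite !preimage_bigcap; try exact: closed_bigI.
move=> b fb i Pi; have [_ _ fDi] := fD i Pi; apply: fDi.
apply: admissible_subset fb; [exact: closed_bigI | exact: cl |].
by move=> a /(_ i Pi).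
Qed.

Lemma closed_adjP (D : set (adj f)) : closed D <-> adj_closed f D.
Proof.
split; last exact: adj_closed_closed.
rewrite -openC => -[U subU /(congr1 setC)]; rewrite setCK setC_bigcup => <-.
apply: adj_closed_bigcap => _ /subU [S subS <-].
rewrite setC_bigcap bigcup_fset big_seq.
apply: (big_ind (adj_closed f)); [exact: adj_closed0 | exact: adj_closedU |].
by move=> i /subS; rewrite inE.
Qed.

Lemma continuous_inl : continuous (inl : A -> adj f).
Proof. by apply/continuous_closedP => D /closed_adjP[]. Qed.

Lemma closure_inl_image (C : set A) :
  inl @^-1` closure (inl @` C : set (adj f)) `<=` closure C.
Proof.
pose E : set (adj f) := fun s =>
  match s with inl a => closure C a | inr b => f (closure C) b end.
have cE : closed E.
  apply/closed_adjP; have [fc _ _] := adm.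
  by split => //; [exact: closed_closure | apply: fc; exact: closed_closure].
suff clE : closure (inl @` C : set (adj f)) `<=` E by move=> a /clE.
move/closure_id: cE => ->; apply: closureS.
by move=> _ [x Cx <-]; apply: subset_closure.
Qed.

Lemma compact_inl_image (C : set A) :
  compact (inl @` C : set (adj f)) <-> compact C.
Proof.
split=> [cC F PF FC|]; last first.
  move=> cC; apply: continuous_compact cC.
  exact/continuous_subspaceT/continuous_inl.
have inlF D : F D -> (inl @ F) (inl @` D : set (adj f)).
  by move=> FD; rewrite fmapE; apply: filterS FD => a Da; exists a.
have [_ [[y Cy <-] cly]] := cC (inl @ F) _ (inlF _ FC).
exists y; split => //; rewrite clusterE => D FD.
by apply: closure_inl_image; move: cly; rewrite clusterE; apply; apply: inlF.
Qed.

Lemma compact_adj_null (C : set A) :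
  compact [set: adj f] -> closed C -> f C = set0 -> compact C.
Proof.
move=> cT cC fC0; apply/compact_inl_image/(subclosed_compact _ cT) => //.
have inlK : inl @^-1` (inl @` C : set (adj f)) = C.
  by apply/seteqP; split => [a [x Cx [<-]] //|]; apply: preimage_image.
apply/closed_adjP; split; rewrite ?inlK ?fC0 //.
rewrite (_ : _ @^-1` _ = set0); first exact: closed0.
by apply/seteqP; split => // b [].
Qed.

Lemma compact_adj :
  compact [set: B] -> (forall C, closed C -> f C = set0 -> compact C) ->
  compact [set: adj f].
Proof.
move=> cB cnull F PF _.
have closure_adj (D : set (adj f)) : adj_closed f (closure D).
  by apply/closed_adjP/closed_closure.
have [meetB|/existsNP[D0 /not_implyP[FD0 missB]]] :=
  pselect (forall D, F D -> exists b, closure D (inr b)).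
- pose G := filter_from F (fun D => inr @^-1` closure D : set B).
  have PG : ProperFilter G.
    apply: filter_from_proper; last by move=> D /meetB[b ?]; exists b.
    apply: filter_from_filter; first by exists setT; apply: filterT.
    move=> D E FD FE; exists (D `&` E); first exact: filterI.
    by move=> b /closureI.
  have GB : G setT by exists setT => //; apply: filterT.
  have [b [_ clb]] := cB G PG GB.
  exists (inr b); split => //; rewrite clusterE => D FD.
  have [_ cDr _] := closure_adj D.
  move: clb; rewrite clusterE => /(_ (inr @^-1` closure D)).
  by move/closure_id: cDr => <-; apply; exists D.
- have [cK _ fK] := closure_adj D0.
  set K := inl @^-1` closure D0 in cK fK.
  have fK0 : f K = set0.
    by apply/seteqP; split => // b /fK Kb; apply: missB; exists b.
  have FK : F (inl @` K : set (adj f)).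
    apply: filterS FD0 => -[a|b] D0s.
      by exists a => //; apply: subset_closure.
    by exfalso; apply: missB; exists b; apply: subset_closure.
  have [q [_ clq]] := (compact_inl_image K).2 (cnull _ cK fK0) F PF FK.
  by exists q.
Qed.

End AdjunctionSpace.

Lemma continuous_idsumP (A B C : topologicalType) (f : set A -> set B)
    (g : set A -> set C) (w : B -> C) :
  admissible f -> admissible g ->
  continuous (idsum w : adj f -> adj g) <->
  continuous w /\ forall D, closed D -> f D `<=` w @^-1` g D.
Proof.
move=> admf admg; have [gc g0 _] := admg.
rewrite !continuous_closedP; split; last first.
  move=> [cw fwg] E /(closed_adjP admg)[cEl cEr gE]; apply/(closed_adjP admf).
  by split; [exact: cEl | exact: (cw _ cEr) | move=> b /(fwg _ cEl)/gE].
move=> cont; split=> [E cE | D cD].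
- pose E' : set (adj g) := fun s => if s is inr c then E c else False.
  have gE' : g (inl @^-1` E') = set0 by rewrite -g0.
  have : closed (idsum w @^-1` E' : set (adj f)).
    apply: cont; apply: adj_closed_closed.
    by split; rewrite ?gE' //; apply: closed0.
  by case/(closed_adjP admf).
- pose E : set (adj g) := fun s =>
    match s with inl a => D a | inr c => g D c end.
  have : closed (idsum w @^-1` E : set (adj f)).
    by apply: cont; apply: adj_closed_closed; split => //; apply: gc.
  by case/(closed_adjP admf).
Qed.

Lemma admissible_fstar (X Y Z : topologicalType) (p : X -> Y)
    (f : set Y -> set Z) :
  admissible f -> admissible (fstar p f).
Proof.
case=> fc f0 fU; split=> [C _ | | C D _ _]; first exact: closed_closure.
  by rewrite /fstar image_set0 closure0 f0 closure0.
by rewrite /fstar image_setU closureU fU ?closureU //; apply: closed_closure.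
Qed.

Section Pullback.
Context (X Y Z : topologicalType) (p : X -> Y) (f : set Y -> set Z).
Hypothesis admf : admissible f.

Lemma compact_adj_fstar :
  (forall K, compact K -> compact (p @^-1` K)) ->
  compact [set: Z] -> compact [set: adj f] -> compact [set: adj (fstar p f)].
Proof.
move=> pK cZ cT; apply: (compact_adj (admissible_fstar p admf) cZ) => C cC fC0.
have fpC0 : f (closure (p @` C)) = set0.
  by rewrite -subset0 -fC0; apply: subset_closure.
have cpC : compact (closure (p @` C)).
  by apply: (compact_adj_null admf cT _ fpC0); apply: closed_closure.
apply: subclosed_compact cC (pK _ cpC) _ => x Cx.
by apply: subset_closure; exists x.
Qed.

Lemma continuous_idsum_fstar (W : topologicalType) (g : set Y -> set W)
    (w : Z -> W) :
  admissible g -> continuous (idsum w : adj f -> adj g) ->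
  continuous (idsum w : adj (fstar p f) -> adj (fstar p g)).
Proof.
move=> admg /(continuous_idsumP w admf admg)[cw fwg].
apply/(continuous_idsumP w (admissible_fstar p admf) (admissible_fstar p admg)).
split=> // D _; set E := closure (p @` D).
have cE : closed E by apply: closed_closure.
have cwgE : closed (w @^-1` fstar p g D).
  by move/continuous_closedP: cw; apply; apply: closed_closure.
rewrite /fstar -/E; move/closure_id: cwgE => ->; apply: closureS.
by move=> z /(fwg _ cE) gz; apply: subset_closure.
Qed.

End Pullback.

Theorem mainTheorem13 (X Y : topologicalType)
  (hX : hausdorff_space X) (lcX : locally_compact [set: X])
  (hY : hausdorff_space Y) (lcY : locally_compact [set: Y])
  (pi : X -> Y) (ppi : proper_map pi) :
  (* Pi sends objects of Comp(Y) to objects of Comp(X) *)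
  (forall (Z : topologicalType) (f : set Y -> set Z),
     comp_object f -> comp_object (fstar pi f)) /\
  (* Pi sends morphisms id + w to morphisms id + w *)
  (forall (Z W : topologicalType) (f : set Y -> set Z) (g : set Y -> set W)
          (w : Z -> W),
     comp_object f -> comp_object g -> comp_morphism f g w ->
     comp_morphism (fstar pi f) (fstar pi g) w) /\
  (* Pi preserves identities *)
  (forall (Z : topologicalType), @idsum X Z Z id = id) /\
  (* Pi preserves composition *)
  (forall (Z W V : topologicalType) (w : Z -> W) (w' : W -> V),
     @idsum X W V w' \o @idsum X Z W w = @idsum X Z V (w' \o w)).
Proof.
have [_ pK] := ppi.
split; [|split; [|split]].
- move=> Z f [cZ hZ admf cT]; split => //.
    exact: admissible_fstar.
  exact: compact_adj_fstar.
- by move=> Z W f g w [_ _ admf _] [_ _ admg _]; apply: continuous_idsum_fstar.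
- by move=> Z; apply: funext => -[].
- by move=> Z W V w w'; apply: funext => -[].
Qed.
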